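(* Let $P$ be the transition matrix of a Markov chain on a countable state space. For $\alpha\in[0,1]$ define the transition matrix $Q:=\alpha I+(1-\alpha)P$. For a state $x$ and $k\ge1$, let $p_k(x)$ and $q_k(x)$ be the return probabilities to $x$ after $k$ steps for the chains with transition matrices $P$ and $Q$ respectively, started at $x$. Then $$\sum_{k\ge1} \frac{q_k(x)}{k}=-\log(1-\alpha)+\sum_{k\ge1}\frac{p_k(x)}{k}.$$ *)

From HB Require Import structures.
From mathcomp Require Import all_boot all_order all_algebra.
From mathcomp Require Import all_classical all_reals all_analysis.
Set Implicit Arguments. Unset Strict Implicit. Unset Printing Implicit Defensive.
Import Order.TTheory GRing.Theory Num.Theory.
Local Open Scope classical_set_scope.
Local Open Scope ring_scope.

Definition stochastic (R : realType) (T : countType) (P : T -> T -> R) : Prop :=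
  (forall x y, 0 <= P x y) /\
  (forall x, (\esum_(y in [set: T]) (P x y)%:E = 1)%E).

Fixpoint mpow (R : realType) (T : countType) (P : T -> T -> R) (n : nat)
  : T -> T -> \bar R :=
  match n with
  | 0 => fun x y => ((x == y)%:R)%:E
  | n'.+1 => fun x y => (\esum_(z in [set: T]) (mpow P n' x z * (P z y)%:E))%E
  end.

Definition lazy_chain (R : realType) (T : countType) (alpha : R)
  (P : T -> T -> R) : T -> T -> R :=
  fun x y => alpha * (x == y)%:R + (1 - alpha) * P x y.

Definition neglog1m (R : realType) (alpha : R) : \bar R :=
  if alpha < 1 then (- ln (1 - alpha))%:E else +oo%E.

(* Since I commutes with P, the binomial theorem gives
     q_k(x) = sum_(j <= k) C(k, j) alpha^(k-j) (1-alpha)^j p_j(x),   p_0(x) = 1.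
   Dividing by k and exchanging the two sums of nonnegative terms, the j = 0
   column contributes sum_k alpha^k / k = -log(1 - alpha), and for j >= 1 the
   identity C(k, j) / k = C(k-1, j-1) / j together with the negative binomial
   series sum_m C(m+j-1, j-1) alpha^m = (1-alpha)^-j shows that the column of
   p_j(x) has total weight exactly 1/j. *)
From HB Require Import structures.
From mathcomp Require Import all_boot all_order all_algebra.
From mathcomp Require Import all_classical all_reals all_analysis.
From mathcomp Require Import ring lra.
Import Order.TTheory GRing.Theory Num.Theory.
Import numFieldNormedType.Exports.
Set Implicit Arguments. Unset Strict Implicit. Unset Printing Implicit Defensive.
Local Open Scope classical_set_scope.
Local Open Scope ring_scope.

Section extended_sums.
Local Open Scope ereal_scope.
Variable R : realType.

Lemma esumZl (T : choiceType) (S : set T) (a : T -> \bar R) (r : R) :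
  (0 <= r)%R -> (forall i, S i -> 0 <= a i) ->
  \esum_(i in S) (r%:E * a i) = r%:E * \esum_(i in S) a i.
Proof.
move=> r0 a0; rewrite /esum -ereal_supZl//; last first.
  by apply/set0P; exists 0; exists set0; [exact: fsets_set0|exact: fsbig_set0].
have sumZ A :
    fsets S A -> \sum_(i \in A) (r%:E * a i) = r%:E * \sum_(i \in A) a i.
  move=> [finA AS]; rewrite !fsbig_finite// big_seq [in RHS]big_seq.
  by rewrite ge0_sume_distrr// => i; rewrite in_fset_set// inE => /AS/a0.
congr ereal_sup; apply/seteqP; split=> y.
  by move=> [A SA <-]; exists (\sum_(i \in A) a i); [exists A|rewrite sumZ].
by move=> [_ [A SA <-] <-]; exists A; rewrite ?sumZ.
Qed.

Lemma esum_mul_delta (T : choiceType) (f : T -> \bar R) (y : T) :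
  (forall z, 0 <= f z) -> \esum_(z in [set: T]) (f z * ((z == y)%:R)%:E) = f y.
Proof.
move=> f0; have fd0 z : 0 <= f z * ((z == y)%:R)%:E.
  by rewrite mule_ge0// lee_fin.
rewrite (esumID [set y]) // [X in _ + X]esum1 ?adde0; last first.
  by move=> z [_ /= /eqP/negbTE ->]; rewrite mule0.
by rewrite setTI esum_set1// eqxx mule1.
Qed.

Lemma nneseriesMr (f : nat -> \bar R) (P : pred nat) (y : \bar R) :
  0 <= y -> (forall k, P k -> 0 <= f k) ->
  \sum_(k <oo | P k) (f k * y) = (\sum_(k <oo | P k) f k) * y.
Proof.
case: y => [r||//] y0 f0.
  by under eq_eseriesr do rewrite muleC; rewrite nneseriesZl// muleC.
have [[k Pk fk_gt0]|f_eq0] := pselect (exists2 k, P k & 0 < f k); last first.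
  have fk0 k : P k -> f k = 0.
    move=> Pk; apply/eqP; rewrite eq_le f0// andbT leNgt.
    by apply/negP => fk_gt0; apply: f_eq0; exists k.
  by rewrite !eseries0 ?mul0e// => k _ Pk; rewrite fk0 ?mul0e.
have sum_gt0 : 0 < \sum_(n <oo | P n) f n.
  apply: (lt_le_trans fk_gt0).
  apply: le_trans (nneseries_lim_ge k.+1 (fun n _ => f0 n)).
  rewrite big_mkcond big_nat_recr//= Pk -[leLHS]add0e leeD2r//.
  by apply: sume_ge0 => i _; case: ifP => // /f0.
rewrite gt0_muley//; apply: (@nneseries_pinfty _ _ _ k) => //.
  by move=> n Pn; rewrite mule_ge0// f0.
exact: gt0_muley.
Qed.

Lemma nneseries_eventually0 (f : nat -> \bar R) n : (forall k, 0 <= f k) ->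
  (forall k, (n <= k)%N -> f k = 0) -> \sum_(k <oo) f k = \sum_(0 <= k < n) f k.
Proof.
move=> f0 fn0; rewrite (nneseries_split 0 n) => [|k _]; last exact: f0.
by rewrite add0n [X in _ + X]eseries0 => [|k nk _]; [exact: adde0|exact: fn0].
Qed.

Lemma eseries_mkcond_ge (f : nat -> \bar R) m n : (m <= n)%N ->
  \sum_(m <= k <oo) (if (n <= k)%N then f k else 0) = \sum_(n <= k <oo) f k.
Proof.
move=> mn; rewrite -(eseries_mkcondr f xpredT (fun k => n <= k)%N).
rewrite eseries_cond [RHS]eseries_cond.
by apply: eq_eseriesl => k /=; case: leqP => // /(leq_trans mn) ->.
Qed.

Lemma eseries_EFin (f : nat -> R) (l : R) : series f @ \oo --> l ->
  \sum_(k <oo) (f k)%:E = l%:E.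
Proof.
move=> fl; transitivity (limn (EFin \o series f)).
  by apply/congr_lim/funext => n /=; rewrite sumEFin.
by rewrite EFin_lim ?(cvg_lim _ fl)//; apply/cvg_ex; exists l.
Qed.

End extended_sums.

Section binomial_term.
Variables (R : comPzRingType) (a b : R).

Definition binomial_term k j := 'C(k, j)%:R * a ^+ (k - j)%N * b ^+ j.

Lemma binomial_term0n j : binomial_term 0 j.+1 = 0.
Proof. by rewrite /binomial_term bin0n mulr0n !mul0r. Qed.

Lemma binomial_termS0 k : binomial_term k.+1 0 = a * binomial_term k 0.
Proof. by rewrite /binomial_term !bin0 !subn0 exprS; ring. Qed.

Lemma binomial_termSS k j :
  binomial_term k.+1 j.+1 = a * binomial_term k j.+1 + b * binomial_term k j.
Proof.
rewrite /binomial_term binS natrD subSS.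
have [jk|kj] := ltnP j k; last by rewrite bin_small ?ltnS// exprS; ring.
by rewrite -(subnSK jk) exprS [b ^+ j.+1]exprS; ring.
Qed.

End binomial_term.

Lemma binomial_term_ge0 (R : numDomainType) (a b : R) k j :
  0 <= a -> 0 <= b -> 0 <= binomial_term a b k j.
Proof. by move=> a0 b0; rewrite !mulr_ge0// exprn_ge0. Qed.

Section mpow_affine.
Local Open Scope ereal_scope.
Variables (R : realType) (T : countType).

Lemma mpow_ge0 (Q : T -> T -> R) : (forall u v, (0 <= Q u v)%R) ->
  forall n u v, 0 <= mpow Q n u v.
Proof.
move=> Q0; elim=> [|n IH] u v /=; first by rewrite lee_fin.
by apply: esum_ge0 => z _; rewrite mule_ge0// lee_fin.
Qed.

Variables (P : T -> T -> R) (a b : R).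
Hypotheses (P_ge0 : forall u v, (0 <= P u v)%R) (a_ge0 : (0 <= a)%R)
  (b_ge0 : (0 <= b)%R).

Local Notation Q := (fun u v => a * (u == v)%:R + b * P u v)%R.

Lemma esum_affine_step (f : T -> \bar R) y : (forall z, 0 <= f z) ->
  \esum_(z in [set: T]) (f z * (Q z y)%:E) =
  a%:E * f y + b%:E * \esum_(z in [set: T]) (f z * (P z y)%:E).
Proof.
move=> f0; rewrite -(esum_mul_delta y f0) -!esumZl//; first last.
- by move=> z _; rewrite mule_ge0// lee_fin.
- by move=> z _; rewrite mule_ge0// lee_fin.
rewrite -esumD => [|z _|z _]; rewrite ?mule_ge0 ?lee_fin//.
apply: eq_esum => z _; rewrite EFinD ge0_muleDr ?lee_fin ?mulr_ge0//.
by rewrite !EFinM !muleA ![_ * a%:E]muleC ![_ * b%:E]muleC.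
Qed.

Lemma esum_comb_mpowS (x y : T) n (c : nat -> R) : (forall j, (0 <= c j)%R) ->
  \esum_(z in [set: T])
     ((\sum_(0 <= j < n) (c j)%:E * mpow P j x z) * (P z y)%:E) =
  \sum_(0 <= j < n) (c j)%:E * mpow P j.+1 x y.
Proof.
move=> c0; have cp0 j z : 0 <= (c j)%:E * mpow P j x z.
  by rewrite mule_ge0 ?lee_fin ?mpow_ge0.
under eq_esum do rewrite ge0_sume_distrl//.
rewrite esum_sum => [|z j _ _]; last by rewrite mule_ge0 ?lee_fin.
apply: eq_bigr => j _ /=; under eq_esum do rewrite -muleA.
by rewrite esumZl// => z _; rewrite mule_ge0 ?lee_fin ?mpow_ge0.
Qed.

(* Any n > k works because binomial_term a b k j vanishes for j > k. *)
Lemma mpow_affine (x y : T) k n : (k < n)%N ->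
  mpow Q k x y = \sum_(0 <= j < n) (binomial_term a b k j)%:E * mpow P j x y.
Proof.
have w0 k' j : (0 <= binomial_term a b k' j)%R by exact: binomial_term_ge0.
have wp0 k' j i z : 0 <= (binomial_term a b k' j)%:E * mpow P i x z.
  by rewrite mule_ge0 ?lee_fin ?mpow_ge0.
elim: k n y => [|k IH] [|n] y // kn.
  rewrite big_nat_recl// big1 => [|j _]; last by rewrite binomial_term0n mul0e.
  by rewrite /binomial_term bin0 !expr0 !mulr1 mul1e adde0.
have Q0 u v : (0 <= Q u v)%R by rewrite addr_ge0 ?mulr_ge0.
rewrite [LHS]/= esum_affine_step => [|z]; last exact: mpow_ge0.
rewrite (IH n.+1 _ (ltnW kn)); under eq_esum do rewrite (IH n _ kn).
rewrite esum_comb_mpowS// !ge0_sume_distrr => [|j _|j _]; rewrite ?wp0//.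
rewrite big_nat_recl// [in RHS]big_nat_recl// -addeA; congr (_ + _).
  by rewrite binomial_termS0 muleA -EFinM.
rewrite -big_split; apply: eq_bigr => j _ /=.
rewrite !muleA -!EFinM.
rewrite -ge0_muleDl ?lee_fin ?(mulr_ge0 a_ge0) ?(mulr_ge0 b_ge0)//.
by rewrite binomial_termSS EFinD.
Qed.

End mpow_affine.

Lemma hockey_stick i m :
  (\sum_(0 <= l < m.+1) 'C(l + i, i) = 'C(m + i.+1, i.+1))%N.
Proof.
elim: m => [|m IH]; first by rewrite big_nat1 !add0n !binn.
by rewrite big_nat_recr//= IH addSn binS addnS addnC -addnS addnC.
Qed.

Section negative_binomial_series.
Local Open Scope ereal_scope.
Variables (R : realType) (a : R).
Hypotheses (a_ge0 : (0 <= a)%R) (a_lt1 : (a < 1)%R).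

Lemma nneseries_geometric : \sum_(m <oo) (a ^+ m)%:E = ((1 - a)^-1)%:E.
Proof.
have := @cvg_geometric_series R 1 a; rewrite ger0_norm// mul1r => /(_ a_lt1).
by move/eseries_EFin <-; apply: eq_eseriesr => m _; rewrite /geometric/= mul1r.
Qed.

(* The i.+1-th series is the Cauchy product of the i-th one with the geometric
   series, the convolution of the coefficients being the hockey-stick sum. *)
Lemma nneseries_negative_binomial i :
  \sum_(m <oo) ('C(m + i, i)%:R * a ^+ m)%:E = ((1 - a) ^- i.+1)%:E.
Proof.
elim: i => [|i IH].
  rewrite -exprVn expr1 -nneseries_geometric.
  by apply: eq_eseriesr => m _; rewrite addn0 bin0 mul1r.
pose c l := ('C(l + i, i)%:R * a ^+ l)%R.
have c0 l : (0 <= c l)%R by rewrite mulr_ge0 ?exprn_ge0.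
pose g l m := if (l <= m)%N then (c l * a ^+ (m - l)%N)%:E else 0.
have g0 l m : 0 <= g l m.
  by rewrite /g; case: ifP; rewrite // lee_fin mulr_ge0 ?exprn_ge0.
have convolution m :
    ('C(m + i.+1, i.+1)%:R * a ^+ m)%:E = \sum_(l <oo) g l m.
  rewrite (@nneseries_eventually0 _ _ m.+1)// => [|l ml]; last first.
    by rewrite /g leqNgt ml.
  rewrite -hockey_stick natr_sum mulr_suml -sumEFin.
  apply: eq_big_nat => l /andP[_ lm]; rewrite /g -ltnS lm.
  by rewrite /c -mulrA -exprD subnKC// -ltnS.
have row l : \sum_(m <oo) g l m = (c l)%:E * ((1 - a)^-1)%:E.
  rewrite (eseries_mkcond_ge (fun m => (c l * a ^+ (m - l)%N)%:E) (leq0n l)).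
  rewrite -nneseries_addn => [|m]; last first.
    by rewrite lee_fin mulr_ge0 ?exprn_ge0.
  under eq_eseriesr do rewrite addnK EFinM.
  rewrite nneseriesZl ?nneseries_geometric// => m _.
  by rewrite lee_fin exprn_ge0.
under eq_eseriesr do rewrite convolution.
rewrite nneseries_interchange => [|m l]; last exact: g0.
under eq_eseriesr do rewrite row muleC.
rewrite nneseriesZl => [|l _]; last by rewrite lee_fin.
by rewrite IH -EFinM [in RHS]exprS invfM.
Qed.

Lemma nneseries_binomial_term_div j : (0 < j)%N ->
  \sum_(j <= k <oo) (binomial_term a (1 - a) k j / k%:R)%:E = (j%:R^-1)%:E.
Proof.
case: j => // i _; rewrite -nneseries_addn => [|k]; last first.
  by rewrite lee_fin mulr_ge0 ?invr_ge0// binomial_term_ge0// subr_ge0 ltW.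
have termE m : (binomial_term a (1 - a) (m + i.+1) i.+1 / (m + i.+1)%:R =
    ('C(m + i, i)%:R * a ^+ m) * ((1 - a) ^+ i.+1 / i.+1%:R))%R.
  have binE : ('C((m + i).+1, i.+1)%:R : R) =
      ((m + i).+1%:R * 'C(m + i, i)%:R / i.+1%:R)%R.
    by rewrite -natrM mul_bin_diag natrM mulrAC divff ?mul1r// pnatr_eq0.
  rewrite /binomial_term addnK addnS binE; field.
  by rewrite !paddr_eq0 ?oner_eq0 ?ler0n ?addr_ge0.
under eq_eseriesr do rewrite termE EFinM muleC.
rewrite nneseriesZl => [|m _]; last by rewrite lee_fin mulr_ge0 ?exprn_ge0.
rewrite nneseries_negative_binomial -EFinM; congr (_%:E).
have a1_neq0 : (1 - a != 0)%R by rewrite subr_eq0 eq_sym lt_eqF.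
by rewrite mulrAC divff ?mul1r// expf_neq0.
Qed.

End negative_binomial_series.

Section log_series.
Variable R : realType.

Let c : nat -> R := fun n => n%:R^-1.

Let pseries_diffs_c : pseries_diffs c = fun=> 1.
Proof. by apply/funext => i; rewrite /pseries_diffs /c mulfV// pnatr_eq0. Qed.

Let pseries_diffs2_c : pseries_diffs (pseries_diffs c) = fun i => i.+1%:R.
Proof. by apply/funext => i; rewrite pseries_diffs_c /pseries_diffs mulr1. Qed.

Let cvg_pseries_c K : 0 <= K -> K < 1 -> cvgn (pseries c K).
Proof.
move=> K0 K1; apply: (@series_le_cvg _ _ (geometric 1 K)) => [n|n|n|].
- by rewrite mulr_ge0 ?exprn_ge0// invr_ge0.
- by rewrite /geometric/= mul1r exprn_ge0.
- rewrite /geometric/= mul1r /c ler_piMl ?exprn_ge0//.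
  by case: n => [|n]; rewrite ?invr0// invf_le1// ler1n.
by apply: is_cvg_geometric_series; rewrite ger0_norm.
Qed.

Lemma series_deriv_geometricE (K : R) n :
  (1 - K) ^+ 2 * series (fun i => i.+1%:R * K ^+ i) n =
  1 - n.+1%:R * K ^+ n + n%:R * K ^+ n.+1.
Proof.
elim: n => [|n IH].
  by rewrite /series/= big_geq// mulr0 expr0 mul1r mul0r addr0 subrr.
by rewrite seriesSr mulrDr IH !exprS; ring.
Qed.

Lemma cvg_series_deriv_geometric (K : R) : 0 <= K -> K < 1 ->
  cvgn (series (fun i => i.+1%:R * K ^+ i)).
Proof.
move=> K0 K1; apply: nondecreasing_is_cvgn.
  by apply: nondecreasing_series => n _ _; rewrite mulr_ge0 ?exprn_ge0.
exists ((1 - K) ^- 2) => _ [n _ <-].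
have K12_gt0 : 0 < (1 - K) ^+ 2 by rewrite exprn_gt0// subr_gt0.
rewrite -(ler_pM2l K12_gt0) mulfV ?gt_eqF// series_deriv_geometricE.
suff : n%:R * K ^+ n.+1 <= n.+1%:R * K ^+ n by lra.
rewrite exprS mulrA ler_wpM2r ?exprn_ge0//.
by rewrite (@le_trans _ _ n%:R)// ?ler_piMr ?ler_nat// ltW.
Qed.

Lemma is_derive_ln1B (x : R) : x < 1 ->
  is_derive x 1 (fun y => ln (1 - y)) (- (1 - x)^-1).
Proof.
move=> x1; rewrite -mulrN1.
apply: (@is_derive1_comp _ (@ln R) (fun y => 1 - y)).
  by apply: is_derive1_ln; rewrite subr_gt0.
by rewrite -[-1]sub0r; apply: is_deriveB.
Qed.

Let is_derive_pseries_c (x : R) : `|x| < 1 ->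
  is_derive x 1 (fun y => limn (pseries c y)) (1 - x)^-1.
Proof.
move=> x1; have := normr_ge0 x; pose K := (1 + `|x|) / 2 => x_ge0.
have K0 : 0 <= K by rewrite /K; lra.
have K1 : K < 1 by rewrite /K; lra.
have xK : `|x| < `|K| by rewrite [`|K|]ger0_norm// /K; lra.
have cvg1 : cvgn (pseries (pseries_diffs c) K).
  by rewrite pseries_diffs_c; apply: is_cvg_geometric_series; rewrite ger0_norm.
have cvg2 : cvgn (pseries (pseries_diffs (pseries_diffs c)) K).
  by rewrite pseries_diffs2_c; exact: cvg_series_deriv_geometric.
apply: is_derive_eq (pseries_snd_diffs (cvg_pseries_c K0 K1) cvg1 cvg2 xK) _.
rewrite pseries_diffs_c; apply: cvg_lim => //; rewrite -[X in _ --> X]mul1r.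
exact: cvg_geometric_series.
Qed.

(* sum_k a^k / k + ln (1 - a) has derivative 0 on ]-1, 1[ and vanishes at 0. *)
Lemma cvg_series_log (a : R) : 0 <= a -> a < 1 ->
  series (fun k => k%:R^-1 * a ^+ k) @ \oo --> - ln (1 - a).
Proof.
move=> a0 a1; pose F y := limn (pseries c y) + ln (1 - y).
have dF (y : R) : -1 < y < 1 -> is_derive y 1 F 0.
  move=> /andP[y_gtN1 y_lt1]; rewrite -(subrr (1 - y)^-1).
  apply: is_deriveD; last exact: is_derive_ln1B.
  by apply: is_derive_pseries_c; rewrite ltr_norml y_gtN1.
have dF0 (y : R) : y \in `]0, a[ -> is_derive y 1 F ((fun=> 0) y).
  by rewrite in_itv/= => /andP[y0 ya]; apply: dF; apply/andP; split; lra.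
have contF : {within `[0, a], continuous F}.
  apply: derivable_within_continuous => y; rewrite in_itv/= => /andP[y0 ya].
  by apply: ex_derive; apply: dF; apply/andP; split; lra.
have F0 : F 0 = 0.
  rewrite /F subr0 ln1 addr0 (_ : pseries c 0 = fun=> 0) ?lim_cst//.
  apply/funext => n; rewrite /pseries /series/= big1// => -[|i] _.
    by rewrite /c invr0 mul0r.
  by rewrite expr0n mulr0.
have [z _] := MVT_segment a0 dF0 contF.
rewrite mul0r F0 subr0 /F => /eqP; rewrite addr_eq0 => /eqP <-.
exact: cvg_pseries_c.
Qed.

End log_series.

Lemma nneseries_pow_div (R : realType) (a : R) : 0 <= a <= 1 ->
  (\sum_(1 <= k <oo) (a ^+ k / k%:R)%:E = neglog1m a)%E.
Proof.
move=> /andP[a0 a1]; have pow_div_ge0 k : (0 <= (a ^+ k / k%:R)%:E)%E.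
  by rewrite lee_fin mulr_ge0 ?invr_ge0 ?exprn_ge0.
rewrite /neglog1m; have [a_lt1|a_ge1] := ltP a 1.
  rewrite -(eseries_EFin (cvg_series_log a0 a_lt1)).
  rewrite (nneseries_split 0 1) => [|k _]; last by rewrite mulrC pow_div_ge0.
  rewrite add0n big_nat1 invr0 mul0r add0e.
  by apply: eq_eseriesr => k _; rewrite mulrC.
have -> : a = 1 by apply/eqP; rewrite eq_le a1 a_ge1.
rewrite -nneseries_addn//; transitivity (limn (EFin \o series (@harmonic R))).
  apply/congr_lim/funext => n /=; rewrite sumEFin; congr (_%:E).
  by apply: eq_bigr => k _; rewrite expr1n div1r addn1.
apply/cvg_lim => //; apply/cvgeryP/nondecreasing_dvgn_lt.
  by apply: nondecreasing_series => n _ _; exact: harmonic_ge0.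
exact: dvg_harmonic.
Qed.

Section lazy_return_series.
Local Open Scope ereal_scope.
Variables (R : realType) (T : countType) (P : T -> T -> R) (a : R) (x : T).
Hypotheses (P_ge0 : forall u v, (0 <= P u v)%R) (a_ge0 : (0 <= a)%R)
  (a_le1 : (a <= 1)%R).

Local Notation w k j := (binomial_term a (1 - a) k j).
Local Notation p j := (mpow P j x x).

Let a1_ge0 : (0 <= 1 - a)%R. Proof. by rewrite subr_ge0. Qed.

Let w_ge0 k j : (0 <= w k j)%R. Proof. exact: binomial_term_ge0. Qed.

Let p_ge0 j : 0 <= p j. Proof. exact: mpow_ge0. Qed.

Definition lazy_weight k j : R := (if (j <= k)%N then w k j / k%:R else 0)%R.

Lemma lazy_weight_ge0 k j : (0 <= lazy_weight k j)%R.
Proof.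
by rewrite /lazy_weight; case: ifP => // _; rewrite mulr_ge0 ?invr_ge0 ?w_ge0.
Qed.

Lemma lazy_return_div k :
  mpow (lazy_chain a P) k x x * (k%:R^-1)%:E =
  \sum_(j <oo) (lazy_weight k j)%:E * p j.
Proof.
have wp_ge0 j : 0 <= (lazy_weight k j)%:E * p j.
  by rewrite mule_ge0 ?lee_fin ?lazy_weight_ge0.
rewrite (mpow_affine P_ge0 a_ge0 a1_ge0 x x (ltnSn k)).
rewrite (@nneseries_eventually0 _ _ k.+1)// => [|j kj]; last first.
  by rewrite /lazy_weight leqNgt kj mul0e.
rewrite ge0_sume_distrl => [|j _]; last by rewrite mule_ge0 ?lee_fin.
apply: eq_big_nat => j /andP[_ jk].
by rewrite /lazy_weight -ltnS jk muleAC -EFinM.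
Qed.

Lemma lazy_return_series :
  \sum_(1 <= k <oo) mpow (lazy_chain a P) k x x * (k%:R^-1)%:E =
  \sum_(j <oo) (\sum_(1 <= k <oo) (lazy_weight k j)%:E) * p j.
Proof.
under eq_eseriesr do rewrite lazy_return_div.
rewrite eseries_cond nneseries_interchange => [|k j]; last first.
  by rewrite mule_ge0 ?lee_fin ?lazy_weight_ge0.
apply: eq_eseriesr => j _; rewrite [in RHS]eseries_cond nneseriesMr// => k _.
by rewrite lee_fin lazy_weight_ge0.
Qed.

Lemma lazy_weight_series0 : \sum_(1 <= k <oo) (lazy_weight k 0)%:E = neglog1m a.
Proof.
rewrite -nneseries_pow_div ?a_ge0//; apply: eq_eseriesr => k _.
by rewrite /lazy_weight /binomial_term bin0 subn0 expr0 mulr1 mul1r.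
Qed.

Lemma lazy_weight_series j : (a < 1)%R -> (0 < j)%N ->
  \sum_(1 <= k <oo) (lazy_weight k j)%:E = (j%:R^-1)%:E.
Proof.
move=> a_lt1 j_gt0; rewrite -(nneseries_binomial_term_div a_ge0 a_lt1 j_gt0).
rewrite -(eseries_mkcond_ge _ j_gt0).
by apply: eq_eseriesr => k _; rewrite /lazy_weight; case: ifP.
Qed.

End lazy_return_series.

Theorem lemma3p5 (R : realType) (T : countType) (P : T -> T -> R)
  (alpha : R) (x : T) :
  stochastic P -> 0 <= alpha <= 1 ->
  (\sum_(1 <= k <oo) (mpow (lazy_chain alpha P) k x x * (k%:R^-1)%:E)
   = neglog1m alpha + \sum_(1 <= k <oo) (mpow P k x x * (k%:R^-1)%:E))%E.
Proof.
move=> [P_ge0 _] /andP[a_ge0 a_le1].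
have p_ge0 j : (0 <= mpow P j x x)%E by exact: mpow_ge0.
have col_ge0 j :
    (0 <= (\sum_(1 <= k <oo) (lazy_weight alpha k j)%:E) * mpow P j x x)%E.
  by rewrite mule_ge0// nneseries_ge0// => k _ _; rewrite lee_fin lazy_weight_ge0.
rewrite lazy_return_series// (nneseries_split 0 1) => [|j _]; last exact: col_ge0.
rewrite add0n big_nat1 lazy_weight_series0// /= eqxx mule1.
have [a_lt1|a_ge1] := ltP alpha 1; last first.
  have notNy (s : \bar R) : (0 <= s -> s != -oo)%E by case: s.
  rewrite /neglog1m ltNge a_ge1 /= !addye ?notNy// nneseries_ge0// => k _ _.
  by rewrite mule_ge0// lee_fin.
congr (_ + _); rewrite eseries_cond [RHS]eseries_cond.
apply: eq_eseriesr => j /andP[_ j_gt0].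
by rewrite lazy_weight_series// muleC.
Qed.
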